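(* Let $\mathbb{F}\subset\mathbb{C}$ be a field, $k\in\mathbb{N}$ with $k\ge2$, and $P\in\mathbb{Q}[x]$ a polynomial of degree $k$ with derivative $P'$. If an additive function $a\colon\mathbb{F}\to\mathbb{C}$ satisfies \[ a(P(x))=P'(x)\,a(x)\qquad(x\in\mathbb{F}), \] then $a$ is a derivation, i.e. $a(xy)=x\,a(y)+a(x)\,y$ for all $x,y\in\mathbb{F}$.
   Context: A function $a\colon\mathbb{F}\to\mathbb{C}$ is additive if $a(x+y)=a(x)+a(y)$ for all $x,y\in\mathbb{F}$; a derivation is an additive function satisfying the Leibniz rule $a(xy)=x\,a(y)+a(x)\,y$. *)

From mathcomp Require Import all_boot all_algebra complex reals.
Import GRing.Theory Num.Theory.
Local Open Scope ring_scope.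

(* The complex numbers are modelled as R[i] = complex R over a realType R
   (any realType is a complete archimedean ordered field, i.e. the reals). *)

Definition additive_on {C : nzRingType} (F : {pred C}) (a : C -> C) : Prop :=
  {in F &, forall x y, a (x + y) = a x + a y}.

Definition derivation_on {C : nzRingType} (F : {pred C}) (a : C -> C) : Prop :=
  additive_on F a /\ {in F &, forall x y, a (x * y) = x * a y + a x * y}.

From HB Require Import structures.
From mathcomp Require Import all_boot all_algebra complex reals polyorder ring zify.
Import GRing.Theory Num.Theory.
Local Open Scope ring_scope.

(* Fix x in the subfield F and let h range over the natural numbers.  Taylor's
   formula writes Q(x + h) = sum_i Q_[i](x) h^i, where Q = P viewed over the
   complex numbers and Q_[i] = Q^(i)/i! is its normalised i-th derivative.
   Since a is additive (hence Q-linear) and the Q_[i](x) lie in F, the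
   functional equation at x + h reads, as an identity of polynomials in h,
       sum_i a(Q_[i](x)) h^i = (sum_i Q'_[i](x) h^i) * (a x + h a 1).
   If deg P = k >= 2, the coefficient of h^k gives (k - 1) c_k a(1) = 0, so a
   vanishes on the rationals; the coefficient of h^(k-2) then gives
   c_k C(k,2) (a(x^2) - 2 x a(x)) = 0.  Finally an additive function with
   a(x^2) = 2 x a(x) is a derivation, by polarisation. *)

Definition taylor_poly {R : comNzRingType} (p : {poly R}) (x : R) : {poly R} :=
  \poly_(i < size p) p^`N(i).[x].

Lemma coef_taylor_poly (R : comNzRingType) (p : {poly R}) x i :
  (taylor_poly p x)`_i = p^`N(i).[x].
Proof.
rewrite coef_poly; case: ltnP => // size_le_i.
by rewrite nderivn_poly0 ?horner0.
Qed.

Lemma horner_taylor_poly (R : comNzRingType) (p : {poly R}) x h :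
  (taylor_poly p x).[h] = p.[x + h].
Proof. by rewrite horner_poly (nderiv_taylor p (mulrC x h)). Qed.

Lemma poly_eq_on_nat (C : numDomainType) (p q : {poly C}) :
  (forall n : nat, p.[n%:R] = q.[n%:R]) -> p = q.
Proof.
move=> eq_pq; apply/eqP; rewrite -subr_eq0; apply/negPn/negP => nz_pq.
have := max_poly_roots (rs := [seq i%:R | i <- iota 0 (size (p - q))]) nz_pq.
rewrite size_map size_iota ltnn => /(_ _ _)/notF; apply.
  by apply/allP => y /mapP [i _ ->]; rewrite /root hornerD hornerN eq_pq subrr.
by rewrite map_inj_uniq ?iota_uniq // => i j /eqP; rewrite eqr_nat => /eqP.
Qed.

Lemma horner_nderivn_top2 {R : nzRingType} (p : {poly R}) n x :
  (size p <= n.+3)%N ->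
  p^`N(n).[x] = p`_n + p`_n.+1 *+ n.+1 * x + p`_n.+2 *+ 'C(n.+2, 2) * x ^+ 2.
Proof.
move=> size_p; have size_pn : (size p^`N(n) <= 3)%N.
  by rewrite /nderivn; apply: leq_trans (size_poly _ _) _; rewrite leq_subLR addn3.
rewrite (horner_coef_wide x size_pn) !big_ord_recr big_ord0 /= add0r expr0 mulr1 expr1.
rewrite !coef_nderivn addn0 addn1 addn2 binn mulr1n binSn.
by rewrite -(bin_sub (_ : 2 <= n.+2)%N) // !subSS subn0.
Qed.

Lemma horner_nderivn_lead {R : nzRingType} (p : {poly R}) x :
  p^`N((size p).-1).[x] = lead_coef p.
Proof.
rewrite horner_nderivn_top2; last lia.
have beyond_top i : (size p <= i)%N -> p`_i = 0 by move=> ?; rewrite nth_default.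
rewrite (beyond_top (size p).-1.+1) ?(beyond_top (size p).-1.+2); try lia.
by rewrite !mul0rn !mul0r !addr0 lead_coefE.
Qed.

(* 2 C(n+2, 2) = (n+2)(n+1), relating the x^2 coefficients of Q_[n] and Q'_[n]. *)
Lemma bin2_double (n : nat) : ('C(n.+2, 2) * 2 = n.+2 * n.+1)%N.
Proof. by rewrite -[in X in (_ * X)%N]/(2`!) bin_ffact ffactnS ffactn1. Qed.

Section AdditiveOnSubfield.

Variables (C : numFieldType) (F : {pred C}) (a : C -> C).
Hypothesis F_subfield : GRing.divring_closed F.
Hypothesis a_additive : additive_on F a.

(* Register F as a subfield, so that the closure lemmas rpred* apply to it. *)
HB.instance Definition _ := GRing.isDivringClosed.Build C F F_subfield.

Lemma additive_on0 : a 0 = 0.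
Proof. by apply/(addrI (a 0)); rewrite -a_additive ?rpred0 // !addr0. Qed.

Lemma additive_onN x : x \in F -> a (- x) = - a x.
Proof.
by move=> Fx; apply/(addrI (a x)); rewrite -a_additive ?rpredN // !subrr additive_on0.
Qed.

Lemma additive_onMn x n : x \in F -> a (x *+ n) = a x *+ n.
Proof.
move=> Fx; elim: n => [|n IHn]; first by rewrite !mulr0n additive_on0.
by rewrite !mulrS a_additive ?rpredMn // IHn.
Qed.

Lemma additive_onMz x z : x \in F -> a (x *~ z) = a x *~ z.
Proof.
move=> Fx; case: z => n; first exact: additive_onMn.
by rewrite !NegzE !mulrNz additive_onN ?rpredMn // additive_onMn.
Qed.

Lemma rpred_ratrM q y : y \in F -> ratr q * y \in F.
Proof. by move=> Fy; apply: rpredM => //; apply: rpred_rat. Qed.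

Lemma additive_on_ratrM q x : x \in F -> a (ratr q * x) = ratr q * a x.
Proof.
move=> Fx; have den_neq0 : (denq q)%:~R != 0 :> C by rewrite intr_eq0 denq_neq0.
have den_ratr : (denq q)%:~R * ratr q = (numq q)%:~R :> C.
  by rewrite /ratr mulrC divfK.
apply: (mulfI den_neq0); rewrite mulrzl -additive_onMz ?rpred_ratrM //.
by rewrite -mulrzl mulrA den_ratr mulrzl additive_onMz // -mulrzl -den_ratr -mulrA.
Qed.

Lemma additive_on_sum n (f : 'I_n -> C) : (forall i, f i \in F) ->
  a (\sum_(i < n) f i) = \sum_(i < n) a (f i).
Proof.
elim: n f => [|n IHn] f Ff; first by rewrite !big_ord0 additive_on0.
by rewrite !big_ord_recr /= a_additive ?rpred_sum ?IHn.
Qed.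

(* Polarisation: the Leibniz rule on squares implies it on all products. *)
Lemma derivation_of_squares :
  (forall x, x \in F -> a (x * x) = x * a x *+ 2) -> derivation_on F a.
Proof.
move=> a_sq; split=> // x y Fx Fy.
have := a_sq (x + y) (rpredD Fx Fy).
have -> : (x + y) * (x + y) = x * x + (x * y *+ 2 + y * y) by rewrite mulr2n; ring.
rewrite !a_additive ?rpredD ?rpredMn ?rpredM // => expand_sq.
have two_xy : a (x * y) *+ 2 = (x * a y + a x * y) *+ 2.
  apply: (addIr (a (y * y))); apply: (addrI (a (x * x))).
  by rewrite mulr2n expand_sq !a_sq // !mulr2n; ring.
have two_neq0 : (2%:R : C) != 0 by rewrite pnatr_eq0.
by apply: (mulfI two_neq0); rewrite !mulr_natl.
Qed.

Lemma polyOver_ratr (p : {poly rat}) : map_poly ratr p \is a polyOver F.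
Proof. by apply/polyOverP => i; rewrite coef_map rpred_rat. Qed.

(* From here on, a satisfies a(Q(x)) = Q'(x) a(x) for a rational polynomial
   Q of degree n + 2 >= 2. *)
Section RationalPolynomialEquation.

Variables (P : {poly rat}) (n : nat).
Hypothesis size_P : size P = n.+3.

Let Q : {poly C} := map_poly ratr P.

Hypothesis a_Q : forall x, x \in F -> a Q.[x] = Q^`().[x] * a x.

Lemma size_Q : size Q = n.+3.
Proof. by rewrite size_map_poly. Qed.

Lemma size_Q' : size Q^`() = n.+2.
Proof. by rewrite deriv_map size_map_poly polyorder.size_deriv size_P. Qed.

Lemma coef_Q i : Q`_i = ratr P`_i.
Proof. by rewrite coef_map. Qed.

Lemma coef_Q' i : Q^`()`_i = ratr (P`_i.+1 *+ i.+1).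
Proof. by rewrite coef_deriv coef_Q rmorphMn. Qed.

Lemma lead_P_neq0 : ratr P`_n.+2 != 0 :> C.
Proof.
rewrite fmorph_eq0 -[n.+2]/(n.+3).-1 -size_P -lead_coefE.
by rewrite lead_coef_eq0 -size_poly_eq0 size_P.
Qed.

(* Comparing a(Q(x + h)) = Q'(x + h) (a x + h a 1) for all natural h as
   polynomials in h. *)
Lemma a_taylor x : x \in F ->
  map_poly a (taylor_poly Q x) = taylor_poly Q^`() x * ((a x)%:P + (a 1)%:P * 'X).
Proof.
move=> Fx; apply: poly_eq_on_nat => m.
set T := taylor_poly Q x.
have FT i : T`_i \in F.
  by rewrite coef_taylor_poly rpred_horner ?polyOver_nderivn ?polyOver_ratr.
have a_natM y i : y \in F -> a (y * m%:R ^+ i) = a y * m%:R ^+ i.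
  by move=> Fy; rewrite -natrX !mulr_natr additive_onMn.
rewrite /map_poly horner_poly.
under eq_bigr => i _ do rewrite -a_natM //.
rewrite -additive_on_sum => [|i]; last by rewrite rpredM ?rpredX ?rpred_nat.
rewrite -horner_coef horner_taylor_poly a_Q ?rpredD ?rpred_nat //.
rewrite hornerM horner_taylor_poly !hornerE a_additive ?rpred_nat //.
by rewrite additive_onMn ?rpred1 // mulr_natr.
Qed.

(* The coefficient of h^i in the identity above. *)
Lemma a_taylor_coef i x : x \in F ->
  a Q^`N(i).[x] = Q^`()^`N(i).[x] * a x
                  + (if i == 0%N then 0 else Q^`()^`N(i.-1).[x] * a 1).
Proof.
move=> Fx; have := congr1 (fun p : {poly C} => p`_i) (a_taylor x Fx).
rewrite coef_map_id0 ?additive_on0 // mulrDr coefD mulrA coefMX !coefMC.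
by rewrite !coef_taylor_poly.
Qed.

(* The top coefficient forces a to vanish at 1, hence on the rationals. *)
Lemma a_one : a 1 = 0.
Proof.
have := a_taylor_coef n.+2 1 (rpred1 F); rewrite /=.
have := horner_nderivn_lead Q 1; rewrite size_Q lead_coefE size_Q coef_Q /= => ->.
have := horner_nderivn_lead Q^`() 1.
rewrite size_Q' lead_coefE size_Q' coef_Q' /= => ->.
rewrite nderivn_poly0 ?size_Q' // horner0 mul0r add0r.
rewrite -[ratr _]mulr1 additive_on_ratrM ?rpred1 // rmorphMn mulrnAl mulrS.
rewrite -[X in X = _]addr0 => /addrI /esym /eqP.
by rewrite mulrn_eq0 mulf_eq0 (negPf lead_P_neq0) /= => /eqP.
Qed.

Lemma a_ratr q : a (ratr q) = 0.
Proof. by rewrite -[ratr q]mulr1 additive_on_ratrM ?rpred1 // a_one mulr0. Qed.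

(* The coefficient of h^n gives the Leibniz rule for squares. *)
Lemma a_square x : x \in F -> a (x * x) = x * a x *+ 2.
Proof.
move=> Fx; have := a_taylor_coef n x Fx; rewrite a_one mulr0 if_same addr0.
rewrite !horner_nderivn_top2 ?size_Q ?size_Q' //.
rewrite (nth_default 0 (_ : size Q^`() <= n.+2)%N) ?size_Q' // mul0rn mul0r addr0.
rewrite !coef_Q !coef_Q' -!rmorphMn.
rewrite !a_additive ?rpredD ?rpred_ratrM ?rpredX ?rpred_rat //.
rewrite a_ratr add0r !additive_on_ratrM ?rpredX // mulrDl => /addrI.
rewrite !rmorphMn expr2 => coef_eq.
have lead_neq0 : ratr P`_n.+2 *+ 'C(n.+2, 2) != 0 :> C.
  by rewrite mulrn_eq0 negb_or -lt0n bin_gt0 lead_P_neq0.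
apply: (mulfI lead_neq0); rewrite coef_eq -mulrnA -bin2_double mulrnA.
by rewrite -mulrA mulrnAl mulrnAr.
Qed.

End RationalPolynomialEquation.

End AdditiveOnSubfield.

Theorem mainTheorem5 (R : realType) (F : {pred R[i]}) (k : nat) (P : {poly rat})
    (a : R[i] -> R[i]) :
  GRing.divring_closed F ->
  (2 <= k)%N ->
  size P = k.+1 ->
  additive_on F a ->
  (forall x, x \in F -> a ((map_poly ratr P).[x]) = (map_poly ratr P^`()).[x] * a x) ->
  derivation_on F a.
Proof.
move=> F_subfield k_ge2 size_P a_additive a_P.
apply: derivation_of_squares => // x Fx.
case: k k_ge2 size_P => [|[|n]] // _ size_P.
have a_Q y : y \in F -> a (map_poly ratr P).[y] = (map_poly ratr P)^`().[y] * a y.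
  by rewrite deriv_map; exact: a_P.
exact: (@a_square _ F a F_subfield a_additive P n size_P a_Q x Fx).
Qed.
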